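(* For every integer $N\ge 0$, let $T_{1\times 4}(7,N)$ be the number of tilings of a $7\times n$ rectangle, $n=4N/7$, by $N$ tiles of size $1\times 4$ (and $0$ if $4N/7\notin\mathbb{Z}$). Then, as formal power series, \[ \sum_{N\ge 0} T_{1\times 4}(7,N)\,z^N=\frac{(1-z^7)^3}{1-8z^7+6z^{14}-4z^{21}+z^{28}}. \]
   Context: A tiling of an $m\times n$ rectangle (width $m$, length $n$, made of $mn$ unit squares) by $a\times b$ tiles is a partition of the rectangle into non-overlapping axis-parallel $a\times b$ rectangles with integer corner coordinates, each placed in either of its two orientations. Tilings related by reflections or rotations of the rectangle are counted as distinct. The empty tiling counts once for $N=0$. *)

From mathcomp Require Import all_boot all_order all_algebra.
Set Implicit Arguments. Unset Strict Implicit. Unset Printing Implicit Defensive.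
Import GRing.Theory.

Definition rect (m n x y w h : nat) : {set 'I_m * 'I_n} :=
  [set c : 'I_m * 'I_n | (x <= c.1 < x + w) && (y <= c.2 < y + h)].

Definition is_tile (m n a b : nat) (S : {set 'I_m * 'I_n}) : bool :=
  [exists x : 'I_m.+1, exists y : 'I_n.+1,
     ((x + a <= m) && (y + b <= n) && (S == @rect m n x y a b)) ||
     ((x + b <= m) && (y + a <= n) && (S == @rect m n x y b a))].

Definition tiling (m n a b : nat) (P : {set {set 'I_m * 'I_n}}) : bool :=
  partition P [set: 'I_m * 'I_n] && [forall S in P, @is_tile m n a b S].

Definition ntilings (m n a b N : nat) : nat :=
  #|[set P : {set {set 'I_m * 'I_n}} | @tiling m n a b P && (#|P| == N)]|.

Definition T14_7 (N : nat) : nat :=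
  if 7 %| 4 * N then ntilings 7 (4 * N %/ 7) 1 4 N else 0.

(* Scan the 7 x n strip column by column.  What a partial tiling leaves to tile is
   determined by the remaining length and a profile: how far each row already sticks out
   beyond the first incompletely covered column.  Covering the first free cell of that
   column by a horizontal or a vertical 1 x 4 tile gives a linear recursion between 91
   profiles, i.e. a transfer matrix.  Eliminating every profile but the flat one from it
   yields t(l+16) - 8 t(l+12) + 6 t(l+8) - 4 t(l+4) + t(l) = 0 for the number t(l) of
   tilings of the 7 x l strip: this is the denominator, and the first values
   t(0), t(4), t(8), t(12) = 1, 5, 37, 269 give the numerator. *)

From mathcomp Require Import all_boot all_order all_algebra zify ring.
Import GRing.Theory.

Set Implicit Arguments.
Unset Strict Implicit.
Unset Printing Implicit Defensive.

Section RegionTilings.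
Variables (m n a b : nat).
Hypotheses (a_gt0 : 0 < a) (b_gt0 : 0 < b) (a_neq_b : a != b).
Notation cell := ('I_m * 'I_n)%type.

Definition tilings_of (R : {set cell}) : {set {set {set cell}}} :=
  [set P | partition P R && [forall S in P, is_tile a b S]].

Definition ntilings_of (R : {set cell}) : nat := #|tilings_of R|.

Lemma ntilings_of0 : ntilings_of set0 = 1.
Proof.
rewrite /ntilings_of (_ : tilings_of set0 = [set set0]) ?cards1 //.
apply/setP => P; rewrite !inE partition_set0.
by case: eqP => [-> | //]; apply/forallP => S; rewrite inE.
Qed.

Lemma mem_rect x y w h (c : cell) :
  (c \in rect m n x y w h) = (x <= c.1 < x + w) && (y <= c.2 < y + h).
Proof. by rewrite inE. Qed.

Lemma is_tile_rect x y w h : x + w <= m -> y + h <= n ->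
  ((w == a) && (h == b)) || ((w == b) && (h == a)) -> is_tile a b (rect m n x y w h).
Proof.
move=> xw yh wh; apply/existsP; exists (inord x); apply/existsP; exists (inord y).
rewrite !inordK; [|lia|lia].
by case/orP: wh => /andP[/eqP ? /eqP ?]; subst w h; rewrite xw yh eqxx ?orbT.
Qed.

Lemma is_tileP (S : {set cell}) : is_tile a b S ->
  exists x y w h, [/\ x + w <= m, y + h <= n,
    ((w == a) && (h == b)) || ((w == b) && (h == a)) & S = rect m n x y w h].
Proof.
case/existsP => x /existsP[y] /orP[] /andP[/andP[xw yh] /eqP->].
  by exists x, y, a, b; rewrite !eqxx.
by exists x, y, b, a; rewrite !eqxx orbT.
Qed.

Lemma card_rect x y w h : x + w <= m -> y + h <= n -> #|rect m n x y w h| = w * h.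
Proof.
move=> xw yh.
have card_interval p z l : z + l <= p -> #|[set i : 'I_p | z <= i < z + l]| = l.
  move=> zl; have shift_lt (k : 'I_l) : z + k < p by have := ltn_ord k; lia.
  rewrite -[RHS]card_ord -(card_imset _ (f := fun k => Ordinal (shift_lt k))); last first.
    by move=> k1 k2 [] /eqP; rewrite eqn_add2l => /eqP/val_inj.
  apply: eq_card => i; rewrite inE; apply/idP/imsetP => [/andP[zi il] | [k _ ->] /=].
    have kl : i - z < l by lia.
    by exists (Ordinal kl) => //; apply: val_inj => /=; lia.
  by have := ltn_ord k; lia.
have -> : rect m n x y w h = setX [set i : 'I_m | x <= i < x + w] [set j : 'I_n | y <= j < y + h].
  by apply/setP => -[i j]; rewrite !inE.
by rewrite cardsX !card_interval.
Qed.

Lemma card_tile (S : {set cell}) : is_tile a b S -> #|S| = a * b.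
Proof.
by case/is_tileP => x [y [w [h [xw yh wh ->]]]]; rewrite card_rect //;
  case/orP: wh => /andP[/eqP-> /eqP->]; rewrite // mulnC.
Qed.

Lemma card_tilings_with (R T : {set cell}) : is_tile a b T -> T != set0 ->
  #|[set P in tilings_of R | T \in P]| = if T \subset R then ntilings_of (R :\: T) else 0.
Proof.
move=> tileT /set0Pn[c cT]; case: ifPn => [TR | notTR]; last first.
  apply/eqP; rewrite cards_eq0; apply/eqP/setP => P; rewrite !inE.
  by apply/negP => /andP[/andP[/partitionS PR _] /PR TR]; rewrite TR in notTR.
rewrite -(@card_in_imset _ _ (fun P => P :\ T)); last first.
  move=> P Q; rewrite !inE => /andP[_ PT] /andP[_ QT] E.
  by rewrite -(setD1K PT) -(setD1K QT) E.
apply: eq_card => Q; apply/imsetP/idP => [[P] | ].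
  rewrite !inE => /andP[/andP[partP tilesP] PT] ->.
  rewrite partitionD1 //=; apply/forallP => S; apply/implyP.
  by rewrite !inE => /andP[_ SP]; move/forallP: tilesP => /(_ S); rewrite SP.
rewrite inE => /andP[partQ tilesQ].
have TQ : T \notin Q.
  by apply/negP => /(partitionS partQ)/subsetP/(_ c cT); rewrite inE cT.
exists (T |: Q); last by rewrite setU1K.
have disjT : [disjoint T & R :\: T] by rewrite disjoints_subset setCD subsetUr.
rewrite !inE eqxx andbT -{1}(setID R T) (setIidPr TR) partitionU1 //=; last first.
  by apply/set0Pn; exists c.
apply/forallP => S; rewrite !inE; apply/implyP => /orP[/eqP -> // | SQ].
by move/forallP: tilesQ => /(_ S); rewrite SQ.
Qed.

Definition ntilings_with (R : {set cell}) x y w h : nat :=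
  if [&& x + w <= m, y + h <= n & rect m n x y w h \subset R]
  then ntilings_of (R :\: rect m n x y w h) else 0.

Lemma card_tilings_with_rect R x y w h :
  ((w == a) && (h == b)) || ((w == b) && (h == a)) ->
  #|[set P in tilings_of R | [&& x + w <= m, y + h <= n & rect m n x y w h \in P]]|
  = ntilings_with R x y w h.
Proof.
move=> wh; rewrite /ntilings_with.
have [xw | ] := boolP (x + w <= m); last first.
  by move=> _; apply/eqP; rewrite cards_eq0; apply/eqP/setP => P; rewrite !inE andbF.
have [yh | ] := boolP (y + h <= n); last first.
  by move=> _; apply/eqP; rewrite cards_eq0; apply/eqP/setP => P; rewrite !inE andbF.
rewrite /= -card_tilings_with ?is_tile_rect //.
have w_gt0 : 0 < w by case/orP: wh => /andP[/eqP-> _].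
have h_gt0 : 0 < h by case/orP: wh => /andP[_ /eqP->].
have xm : x < m by lia.
have yn : y < n by lia.
by apply/set0Pn; exists (Ordinal xm, Ordinal yn); rewrite mem_rect /=; lia.
Qed.

Definition colex_le (c c' : cell) : bool :=
  (c.2 < c'.2) || (c.2 == c'.2 :> nat) && (c.1 <= c'.1).

Lemma first_cell_tile R P (c : cell) : P \in tilings_of R -> c \in R ->
  {in R, forall c', colex_le c c'} ->
  [&& c.1 + a <= m, c.2 + b <= n & rect m n c.1 c.2 a b \in P] ||
  [&& c.1 + b <= m, c.2 + a <= n & rect m n c.1 c.2 b a \in P].
Proof.
rewrite inE => /andP[partP tilesP] cR c_first.
have cP : c \in cover P by rewrite (cover_partition partP).
have blockP := pblock_mem cP.
move/forallP: tilesP => /(_ (pblock P c)); rewrite blockP => /is_tileP.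
move=> [x [y [w [h [xw yh wh blockE]]]]].
have w_gt0 : 0 < w by case/orP: wh => /andP[/eqP-> _].
have h_gt0 : 0 < h by case/orP: wh => /andP[_ /eqP->].
have xm : x < m by lia.
have yn : y < n by lia.
have cornerR : (Ordinal xm, Ordinal yn) \in R.
  by apply: subsetP (partitionS partP blockP) _ _; rewrite blockE mem_rect /=; lia.
have := mem_pblock P c; rewrite cP blockE mem_rect => c_in_block.
have := c_first _ cornerR; rewrite /colex_le /= => corner_after_c.
have [ex ey] : x = c.1 /\ y = c.2 by lia.
rewrite {}ex {}ey in xw yh blockE.
by case/orP: wh => /andP[/eqP ? /eqP ?]; subst w h; rewrite -blockE blockP xw yh ?orbT.
Qed.

Lemma rect_transpose_neq x y : x < m -> y + a <= n -> y + b <= n ->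
  rect m n x y a b != rect m n x y b a.
Proof.
move=> xm ya yb; apply/eqP/setP.
case: (ltngtP a b) => [ab | ba | /eqP]; last by rewrite (negbTE a_neq_b).
- have yan : y + a < n by lia.
  by move/(_ (Ordinal xm, Ordinal yan)); rewrite !mem_rect /=; lia.
- have ybn : y + b < n by lia.
  by move/(_ (Ordinal xm, Ordinal ybn)); rewrite !mem_rect /=; lia.
Qed.

Lemma ntilings_of_first_cell (R : {set cell}) (c : cell) : c \in R ->
  {in R, forall c', colex_le c c'} ->
  ntilings_of R = ntilings_with R c.1 c.2 a b + ntilings_with R c.1 c.2 b a.
Proof.
move=> cR c_first.
set A := [set P in tilings_of R | [&& c.1 + a <= m, c.2 + b <= n & rect m n c.1 c.2 a b \in P]].
set B := [set P in tilings_of R | [&& c.1 + b <= m, c.2 + a <= n & rect m n c.1 c.2 b a \in P]].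
have tilings_AB : tilings_of R = A :|: B.
  apply/setP => P; rewrite !inE; apply/idP/idP => [PR | /orP[] /andP[] //].
  by rewrite PR (@first_cell_tile R) // inE.
have disjAB : A :&: B = set0.
  apply/setP => P; rewrite !inE; apply/negP.
  move=> /andP[/andP[PR /and3P[_ cb HP]] /andP[_ /and3P[_ ca VP]]].
  have trivP := partition_trivIset (andP PR).1.
  have cH : c \in rect m n c.1 c.2 a b by rewrite mem_rect; lia.
  have cV : c \in rect m n c.1 c.2 b a by rewrite mem_rect; lia.
  have := rect_transpose_neq (ltn_ord c.1) ca cb.
  by rewrite -(def_pblock trivP HP cH) -(def_pblock trivP VP cV) eqxx.
by rewrite /ntilings_of tilings_AB cardsU disjAB cards0 subn0 -!card_tilings_with_rect ?eqxx ?orbT.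
Qed.

Lemma ntilings_full N : N * (a * b) = m * n -> ntilings m n a b N = ntilings_of setT.
Proof.
move=> Nab; rewrite /ntilings /ntilings_of; apply: eq_card => P; rewrite !inE /tiling.
have [partP | ] //= := boolP (partition P setT).
have [tilesP | ] //= := boolP [forall S in P, is_tile a b S].
have card_block : {in P, forall S : {set cell}, #|S| = a * b}.
  by move=> S SP; apply: card_tile; move/forallP: tilesP => /(_ S); rewrite SP.
have := card_uniform_partition card_block partP.
rewrite cardsT card_prod !card_ord -Nab => /eqP.
by rewrite eqn_mul2r muln_eq0 !eqn0Ngt a_gt0 b_gt0 eq_sym.
Qed.

End RegionTilings.

Definition seqmin (s : seq nat) : nat := foldr minn (head 0 s) s.

Lemma seqmin_le s i : i < size s -> seqmin s <= nth 0 s i.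
Proof.
rewrite /seqmin; move: (head 0 s) => y.
by elim: s i => [|x s IH] [|i] //=; [lia | rewrite ltnS => /IH; lia].
Qed.

Lemma seqmin_mem s : 0 < size s -> seqmin s \in s.
Proof.
have foldr_minn_mem y t : foldr minn y t \in y :: t.
  elim: t => [|z t IH] /=; first exact: mem_head.
  rewrite /minn; case: ltnP => _; first by rewrite !inE eqxx orbT.
  by move: IH; rewrite !inE => /orP[] ->; rewrite ?orbT.
case: s => // x s _; rewrite /seqmin /=; have /= := foldr_minn_mem x (x :: s).
by rewrite inE => /orP[/eqP-> | ]; rewrite ?mem_head.
Qed.

Section Profiles.
Variables (m k : nat).
Hypothesis k_gt1 : 1 < k.

Definition profile (d : seq nat) : bool := (size d == m) && (0 \in d).

Definition lower (d : seq nat) : seq nat := [seq x - seqmin d | x <- d].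

Definition place_h (d : seq nat) : seq nat := set_nth 0 d (index 0 d) k.

Definition fits_v (d : seq nat) : bool :=
  (index 0 d + k <= m) && all (fun i => nth 0 d i == 0) (iota (index 0 d) k).

Definition place_v (d : seq nat) : seq nat :=
  mkseq (fun i => if index 0 d <= i < index 0 d + k then 1 else nth 0 d i) m.

Definition moves (d : seq nat) : seq (seq nat * nat) :=
  (lower (place_h d), seqmin (place_h d)) ::
  (if fits_v d then [:: (lower (place_v d), seqmin (place_v d))] else [::]).

(* Row [i] of [region n l d] consists of the last [l - d_i] cells of the [m x n] strip:
   the region left to tile when the frontier is at column [n - l] and row [i] is already
   covered [d_i] cells beyond it. *)
Definition region n l d : {set 'I_m * 'I_n} :=
  [set c : 'I_m * 'I_n | n - (l - nth 0 d c.1) <= c.2].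

(* Covers the first cell of [region n l d] by a horizontal or a vertical tile and
   recurses; [fuel] only bounds the recursion depth. *)
Fixpoint strip_count_fuel (fuel l : nat) (d : seq nat) : nat :=
  if l == 0 then 1 else
  if fuel is f.+1 then
    (if k <= l then strip_count_fuel f (l - seqmin (place_h d)) (lower (place_h d)) else 0)
  + (if fits_v d then strip_count_fuel f (l - seqmin (place_v d)) (lower (place_v d)) else 0)
  else 0.

Lemma profile_lower d : size d = m -> 0 < m -> profile (lower d).
Proof.
move=> sd m_gt0; rewrite /profile size_map sd eqxx /=.
by apply/mapP; exists (seqmin d); rewrite ?subnn ?seqmin_mem ?sd.
Qed.

Lemma profile_index d : profile d -> index 0 d < m /\ nth 0 d (index 0 d) = 0.
Proof. by case/andP => /eqP <- d0; split; rewrite ?index_mem ?nth_index. Qed.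

Lemma size_place_h d : profile d -> size (place_h d) = m.
Proof.
move=> pd; have [i0m _] := profile_index pd; case/andP: pd => /eqP sd _.
by rewrite size_set_nth sd; lia.
Qed.

Lemma nth_place_h d i : nth 0 (place_h d) i = if i == index 0 d then k else nth 0 d i.
Proof. exact: nth_set_nth. Qed.

Lemma size_place_v d : size (place_v d) = m.
Proof. exact: size_mkseq. Qed.

Lemma nth_place_v d i : i < m ->
  nth 0 (place_v d) i = if index 0 d <= i < index 0 d + k then 1 else nth 0 d i.
Proof. exact: nth_mkseq. Qed.

Lemma fits_vP d : reflect (index 0 d + k <= m /\
  forall i, index 0 d <= i < index 0 d + k -> nth 0 d i = 0) (fits_v d).
Proof.
apply: (iffP andP) => -[i0k zeros]; split=> //.
  by move=> i; rewrite -mem_iota => /(allP zeros)/eqP.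
by apply/allP => i; rewrite mem_iota => /zeros ->.
Qed.

Lemma moves_offset_le d p : p \in moves d -> p.2 <= k.
Proof.
rewrite inE => /orP[/eqP-> /= | ].
  have := @seqmin_le (place_h d) (index 0 d).
  by rewrite nth_place_h eqxx size_set_nth; apply; lia.
case: ifP => // /fits_vP[i0k _]; rewrite inE => /eqP-> /=.
have := @seqmin_le (place_v d) (index 0 d); rewrite size_place_v nth_place_v; last by lia.
have i0_lt : index 0 d < index 0 d + k by lia.
rewrite leqnn i0_lt /= => min_le1.
by apply: leq_trans (min_le1 _) (ltnW k_gt1); lia.
Qed.

Lemma region0 n d : region n 0 d = set0.
Proof. by apply/setP => c; rewrite !inE sub0n subn0 leqNgt ltn_ord. Qed.

Lemma region_gt0 n l d : profile d -> 0 < l <= n -> 0 < #|region n l d|.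
Proof.
move=> pd /andP[l_gt0 ln]; have [i0m i0_zero] := profile_index pd.
have nl : n - l < n by lia.
by apply/card_gt0P; exists (Ordinal i0m, Ordinal nl); rewrite inE /= i0_zero; lia.
Qed.

Lemma region_place_h n l d : profile d -> k <= l <= n ->
  region n (l - seqmin (place_h d)) (lower (place_h d)) =
  region n l d :\: rect m n (index 0 d) (n - l) 1 k.
Proof.
move=> pd /andP[kl ln]; have [i0m i0_zero] := profile_index pd.
have size_h := size_place_h pd.
apply/setP => -[i j]; rewrite !inE /= (nth_map 0) ?size_h // nth_place_h.
have := @seqmin_le (place_h d) (index 0 d); rewrite size_h nth_place_h eqxx => /(_ i0m).
have := @seqmin_le (place_h d) i; rewrite size_h nth_place_h => /(_ (ltn_ord i)).
have := ltn_ord i; have := ltn_ord j.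
by case: eqP => [ei | ne] /=; rewrite ?ei ?i0_zero; lia.
Qed.

Lemma region_place_v n l d : profile d -> fits_v d -> 0 < l <= n ->
  region n (l - seqmin (place_v d)) (lower (place_v d)) =
  region n l d :\: rect m n (index 0 d) (n - l) k 1.
Proof.
move=> pd /fits_vP[i0k zeros] /andP[l_gt0 ln]; have [i0m i0_zero] := profile_index pd.
apply/setP => -[i j]; rewrite !inE /= (nth_map 0) ?size_place_v // nth_place_v //.
have := @seqmin_le (place_v d) (index 0 d); rewrite size_place_v nth_place_v //.
rewrite leqnn (_ : index 0 d < index 0 d + k) /=; last by lia.
move=> /(_ i0m); have := @seqmin_le (place_v d) i.
rewrite size_place_v nth_place_v // => /(_ (ltn_ord i)).
have := ltn_ord i; have := ltn_ord j.
by case: ifP => [/zeros-> | _]; lia.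
Qed.

Lemma ntilings_region_step n l d : profile d -> 0 < l <= n ->
  ntilings_of 1 k (region n l d) =
    (if k <= l
     then ntilings_of 1 k (region n (l - seqmin (place_h d)) (lower (place_h d))) else 0)
  + (if fits_v d
     then ntilings_of 1 k (region n (l - seqmin (place_v d)) (lower (place_v d))) else 0).
Proof.
move=> pd /andP[l_gt0 ln]; have [i0m i0_zero] := profile_index pd.
have nl : n - l < n by lia.
pose c : 'I_m * 'I_n := (Ordinal i0m, Ordinal nl).
have cR : c \in region n l d by rewrite inE /= i0_zero; lia.
have c_first : {in region n l d, forall c', colex_le c c'}.
  case=> i j; rewrite inE /colex_le /= => ij; have := ltn_ord i; have := ltn_ord j.
  case: (ltnP i (index 0 d)) => [/(before_find 0)/= /eqP nz | _]; lia.
rewrite (ntilings_of_first_cell _ _ _ cR c_first) ?(ltn_trans _ k_gt1) ?ltn_eqF //.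
rewrite /ntilings_with /= (_ : index 0 d + 1 <= m) //; last by lia.
congr (_ + _).
  have [kl | lk] := leqP k l; last by rewrite (_ : n - l + k <= n = false) //; lia.
  rewrite (_ : n - l + k <= n) /=; last by lia.
  rewrite -region_place_h ?kl ?ln // ifT //.
  apply/subsetP => -[i j]; rewrite !inE /= => /andP[/andP[? ?] /andP[? ?]].
  by rewrite (_ : nat_of_ord i = index 0 d) ?i0_zero; lia.
have [fits | not_fits] := boolP (fits_v d).
  rewrite -region_place_v ?l_gt0 // ifT //.
  case/fits_vP: fits => i0k zeros; rewrite i0k (_ : n - l + 1 <= n) /=; last by lia.
  apply/subsetP => -[i j]; rewrite !inE /= => /andP[/andP[? ?] /andP[? ?]].
  by rewrite zeros; lia.
rewrite ifF //; apply/negP => /and3P[i0k _ /subsetP sub]; case/fits_vP: not_fits.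
split=> // i /andP[i0i ik]; have im : i < m by lia.
have := sub (Ordinal im, Ordinal nl); rewrite !inE /= i0i ik leqnn addn1 ltnSn.
by move=> /(_ isT); lia.
Qed.

Lemma card_region_setD_corner n l d w h : profile d -> 0 < l <= n -> 0 < w -> 0 < h ->
  #|region n l d :\: rect m n (index 0 d) (n - l) w h| < #|region n l d|.
Proof.
move=> pd /andP[l_gt0 ln] w_gt0 h_gt0; have [i0m i0_zero] := profile_index pd.
have nl : n - l < n by lia.
apply/proper_card/properP; split; first exact: subsetDl.
by exists (Ordinal i0m, Ordinal nl); rewrite !inE /= ?i0_zero; lia.
Qed.

Lemma strip_count_fuel_region f n l d : profile d -> l <= n -> #|region n l d| <= f ->
  strip_count_fuel f l d = ntilings_of 1 k (region n l d).
Proof.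
elim: f l d => [|f IH] l d pd ln fuel; have [-> | l_gt0] := posnP l;
  rewrite ?region0 ?ntilings_of0 //; have l_range : 0 < l <= n by rewrite l_gt0.
  by have := region_gt0 pd l_range; lia.
have [i0m _] := profile_index pd.
rewrite ntilings_region_step //= gtn_eqF //; congr (_ + _).
  case: ifP => // kl; have := card_region_setD_corner pd l_range (ltn0Sn 0) (ltnW k_gt1).
  rewrite -region_place_h ?kl // => lt; apply: IH; last by lia.
    by rewrite profile_lower ?size_place_h //; lia.
  by lia.
case: ifP => // fits; have := card_region_setD_corner pd l_range (ltnW k_gt1) (ltn0Sn 0).
rewrite -region_place_v // => lt; apply: IH; last by lia.
  by rewrite profile_lower ?size_place_v //; lia.
by lia.
Qed.

Lemma card_region n l d : #|region n l d| <= m * n.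
Proof. by apply: leq_trans (max_card _) _; rewrite card_prod !card_ord. Qed.

(* One unit of fuel beyond the [m * l] cells lets [strip_count_rec] unfold a step. *)
Definition strip_count l d : nat := strip_count_fuel (m * l).+1 l d.

Lemma strip_count_fuel_enough f l d : profile d -> m * l <= f ->
  strip_count_fuel f l d = strip_count l d.
Proof.
move=> pd lf; rewrite /strip_count !(strip_count_fuel_region (n := l)) //.
  exact: leq_trans (card_region _ _ _) (leqnSn _).
exact: leq_trans (card_region _ _ _) lf.
Qed.

Lemma strip_count_region l d : profile d -> strip_count l d = ntilings_of 1 k (region l l d).
Proof.
move=> pd; rewrite /strip_count (strip_count_fuel_region (n := l)) //.
exact: leq_trans (card_region _ _ _) (leqnSn _).
Qed.

Lemma strip_count_rec l d : profile d -> k <= l ->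
  strip_count l d = \sum_(p <- moves d) strip_count (l - p.2) p.1.
Proof.
move=> pd kl; have [i0m _] := profile_index pd.
rewrite /strip_count /= gtn_eqF ?kl /moves ?big_cons; last by lia.
congr (_ + _).
  by rewrite strip_count_fuel_enough ?profile_lower ?size_place_h //; lia.
case: ifP => _; last by rewrite big_nil.
by rewrite big_seq1 strip_count_fuel_enough ?profile_lower ?size_place_v //; lia.
Qed.

Lemma ntilings_strip_count n N : 0 < m -> N * k = m * n ->
  ntilings m n 1 k N = strip_count n (nseq m 0).
Proof.
move=> m_gt0 Nk.
rewrite ntilings_full ?mul1n ?(ltnW k_gt1) ?ltn_eqF // strip_count_region; last first.
  by rewrite /profile size_nseq mem_nseq m_gt0 !eqxx.
congr ntilings_of; apply/setP => c; rewrite !inE nth_nseq.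
by case: ifP; rewrite subn0 ?subnn.
Qed.

End Profiles.

Section Elimination.
Variables (S : eqType) (ok : pred S) (succ : S -> seq (S * nat)) (r : nat).
Local Open Scope ring_scope.

(* A term [((s, i), c)] stands for [c * g (M + i) s], for a function [g] obeying
   [g l s = \sum_(p <- succ s) g (l - p.2) p.1] whenever [ok s] and [r <= l]. *)
Definition lincomb := seq ((S * nat) * int).

Definition lc_coef (f : lincomb) (t : S * nat) : int :=
  foldr (fun e c => if e.1 == t then e.2 + c else c) 0 f.

Definition lc_expand (f : lincomb) (t : S * nat) : lincomb :=
  if ok t.1 && (r <= t.2)%N then
    [seq e <- f | e.1 != t] ++ [seq ((p.1, t.2 - p.2)%N, lc_coef f t) | p <- succ t.1]
  else f.

Definition lc_vanishes (f : lincomb) : bool := all (fun e => lc_coef f e.1 == 0) f.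

Lemma lc_coefE f t : lc_coef f t = \sum_(e <- f | e.1 == t) e.2.
Proof. by elim: f => [|e f IH] /=; rewrite ?big_nil ?big_cons // IH. Qed.

Lemma lc_coef_filter f t t' : t' != t -> lc_coef [seq e <- f | e.1 != t] t' = lc_coef f t'.
Proof.
move=> t't; rewrite !lc_coefE big_filter_cond; apply: eq_bigl => e.
by case: eqP => // ->; rewrite eq_sym (negbTE t't).
Qed.

Variable g : nat -> S -> nat.
Hypothesis g_rec : forall l s, ok s -> (r <= l)%N -> g l s = (\sum_(p <- succ s) g (l - p.2) p.1)%N.
Hypothesis succ_offset_le : forall s p, p \in succ s -> (p.2 <= r)%N.
Variable M : nat.

Definition lc_value (f : lincomb) : int := \sum_(e <- f) e.2 * (g (M + e.1.2) e.1.1)%:R.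

Lemma lc_value_split f t :
  lc_value f = lc_value [seq e <- f | e.1 != t] + lc_coef f t * (g (M + t.2) t.1)%:R.
Proof.
rewrite /lc_value big_filter lc_coefE big_distrl /= addrC (bigID (fun e => e.1 == t)) /=.
by congr (_ + _); apply: eq_bigr => e /eqP->.
Qed.

Lemma lc_value_expand f t : lc_value (lc_expand f t) = lc_value f.
Proof.
rewrite /lc_expand; case: ifP => // /andP[ok_t rt].
rewrite [RHS](lc_value_split _ t) /lc_value big_cat /=; congr (_ + _).
rewrite big_map g_rec ?(leq_trans rt (leq_addl _ _)) // natr_sum big_distrr /=.
by apply: eq_big_seq => p /succ_offset_le pr; rewrite addnBA //; apply: leq_trans rt.
Qed.

Lemma lc_value_foldl_expand f ts : lc_value (foldl lc_expand f ts) = lc_value f.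
Proof. by elim: ts f => [|t ts IH] f //=; rewrite IH lc_value_expand. Qed.

Lemma lc_value_vanishes f : lc_vanishes f -> lc_value f = 0.
Proof.
have [n] := ubnP (size f); elim: n f => // n IH [|e f] size_f.
  by rewrite /lc_value big_nil.
case/andP => /eqP coef_e van_f; rewrite (lc_value_split _ e.1) coef_e mul0r addr0 /= eqxx.
apply: IH; first by rewrite size_filter (leq_ltn_trans (count_size _ _)).
apply/allP => x; rewrite mem_filter => /andP[xe xf].
rewrite lc_coef_filter //; move/allP: van_f => /(_ x xf).
by rewrite /= [e.1 == _]eq_sym (negbTE xe).
Qed.

End Elimination.

Definition reach_step (s : seq (seq nat)) : seq (seq nat) :=
  undup (s ++ flatten [seq [seq p.1 | p <- moves 7 4 d] | d <- s]).

(* The profiles reachable from the flat one (twelve rounds of [reach_step] find all 91),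
   by increasing area.  Expanding the terms of offsets 16, 15, ..., 4 over them, in this
   order, eliminates every term of offset at least 4: a move of offset 0 increases the
   area, so it never re-creates a term that was already expanded. *)
Definition strip_profiles : seq (seq nat) :=
  sort (fun d d' => sumn d <= sumn d') (iter 12 reach_step [:: nseq 7 0]).

Definition strip_recurrence : lincomb (seq nat) :=
  [:: ((nseq 7 0, 16), 1%R); ((nseq 7 0, 12), (-8)%R); ((nseq 7 0, 8), 6%R);
      ((nseq 7 0, 4), (-4)%R); ((nseq 7 0, 0), 1%R)].

Definition elimination_order : seq (seq nat * nat) :=
  flatten [seq [seq (d, i) | d <- strip_profiles] | i <- rev (iota 4 13)].

Lemma strip_recurrence_certificate :
  lc_vanishes (foldl (lc_expand (profile 7) (moves 7 4) 4) strip_recurrence elimination_order).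
Proof. by vm_compute. Qed.

Definition full_strip_count (l : nat) : nat := strip_count 7 4 l (nseq 7 0).

Lemma full_strip_count_rec l :
  full_strip_count (l + 16) + 6 * full_strip_count (l + 8) + full_strip_count l =
  8 * full_strip_count (l + 12) + 4 * full_strip_count (l + 4).
Proof.
have := lc_value_foldl_expand (strip_count_rec (m := 7) (k := 4) isT) (@moves_offset_le 7 4 isT)
          l strip_recurrence elimination_order.
rewrite lc_value_vanishes; last exact: strip_recurrence_certificate.
by rewrite /lc_value !big_cons big_nil addn0 /full_strip_count /=; lia.
Qed.

Lemma T14_7_mul7 q : T14_7 (7 * q) = full_strip_count (4 * q).
Proof.
rewrite /T14_7 mulnCA dvdn_mulr // mulKn // ntilings_strip_count //; lia.
Qed.

Lemma T14_7_eq0 N : ~~ (7 %| N) -> T14_7 N = 0.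
Proof. by rewrite /T14_7 Gauss_dvdr // => /negbTE->. Qed.

Lemma T14_7E N : T14_7 N = if 7 %| N then full_strip_count (4 * (N %/ 7)) else 0.
Proof.
by case: ifPn => [/dvdnP[q ->] | /T14_7_eq0 //]; rewrite mulnC T14_7_mul7 mulKn.
Qed.

Lemma T14_7_rec N : 28 <= N ->
  T14_7 N + 6 * T14_7 (N - 14) + T14_7 (N - 28) = 8 * T14_7 (N - 7) + 4 * T14_7 (N - 21).
Proof.
move=> large; have [N7 | N7] := boolP (7 %| N); last by rewrite !T14_7_eq0 //; lia.
have [q ->] : exists q, N = 7 * (q + 4) by exists (N %/ 7 - 4); lia.
have -> : 7 * (q + 4) - 7 = 7 * (q + 3) by lia.
have -> : 7 * (q + 4) - 14 = 7 * (q + 2) by lia.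
have -> : 7 * (q + 4) - 21 = 7 * (q + 1) by lia.
have -> : 7 * (q + 4) - 28 = 7 * q by lia.
by rewrite !T14_7_mul7 !mulnDr; exact: full_strip_count_rec.
Qed.

Local Open Scope ring_scope.

Definition shift (a : nat -> int) (j N : nat) : int := if (N < j)%N then 0 else a (N - j)%N.

Lemma coef_poly_prefix_mulXn (a : nat -> int) N j :
  (\poly_(i < N.+1) a i * 'X^j)`_N = shift a j N.
Proof. by rewrite coefMXn coef_poly /shift; case: ltnP => // _; rewrite ltnS leq_subr. Qed.

Lemma shift_ge a j N : (j <= N)%N -> shift a j N = a (N - j)%N.
Proof. by rewrite /shift ltnNge => ->. Qed.

Lemma coef_poly_prefix_mul_denominator (a : nat -> int) N :
  (\poly_(i < N.+1) a i * (1 - 8 * 'X^7 + 6 * 'X^14 - 4 * 'X^21 + 'X^28 : {poly int}))`_N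
  = a N - 8 * shift a 7 N + 6 * shift a 14 N - 4 * shift a 21 N + shift a 28 N.
Proof.
have denominator_mul (q : {poly int}) : q * (1 - 8 * 'X^7 + 6 * 'X^14 - 4 * 'X^21 + 'X^28) =
    q - (q * 'X^7) *+ 8 + (q * 'X^14) *+ 6 - (q * 'X^21) *+ 4 + q * 'X^28 by ring.
rewrite denominator_mul coefD coefB coefD coefB !coefMn !coef_poly_prefix_mulXn coef_poly ltnSn.
by rewrite !mulr_natl.
Qed.

Lemma coef_numerator N : ((1 - 'X^7) ^+ 3 : {poly int})`_N =
  (N == 0)%:R - 3 * (N == 7)%:R + 3 * (N == 14)%:R - (N == 21)%:R.
Proof.
have -> : (1 - 'X^7) ^+ 3 = 1 - 'X^7 *+ 3 + 'X^14 *+ 3 - 'X^21 :> {poly int} by ring.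
by rewrite coefB coefD coefB !coefMn coef1 !coefXn !mulr_natl.
Qed.

Lemma T14_7_series N :
  let a i := (T14_7 i)%:Z in
  a N - 8 * shift a 7 N + 6 * shift a 14 N - 4 * shift a 21 N + shift a 28 N =
  (N == 0)%:R - 3 * (N == 7)%:R + 3 * (N == 14)%:R - (N == 21)%:R.
Proof.
have [large | small] := leqP 28 N; last first.
  move: N small; do 28! (case; first by move=> _; rewrite /shift /= !T14_7E; vm_compute).
  by [].
rewrite /= !shift_ge ?(leq_trans _ large) // !gtn_eqF ?(leq_trans _ large) //=.
have := T14_7_rec large; lia.
Qed.

Theorem mainTheorem6 : forall N : nat,
  ((\poly_(i < N.+1) ((T14_7 i)%:Z)) *
     (1 - 8 * 'X^7 + 6 * 'X^14 - 4 * 'X^21 + 'X^28 : {poly int}))`_N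
  = (((1 - 'X^7) ^+ 3 : {poly int}))`_N.
Proof.
by move=> N; rewrite coef_poly_prefix_mul_denominator coef_numerator; exact: T14_7_series.
Qed.
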